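(* Let $\mathcal W$ be a monotonic game on $[n]$ and $i\neq j$ players. Then the game $\hat{\mathcal W}$ obtained by imposing an asymmetric non-reciprocal strong YES-quarrel of $i$ against $j$ is quasi-monotonic (i.e. 1-monotonic).
   Context: Players are $[n]=\{1,\dots,n\}$. A binary voting game on $[n]$ is identified with its collection $\mathcal W\subseteq 2^{[n]}$ of winning sets ($S\in\mathcal W$ means the division in which exactly the members of $S$ vote YES has outcome YES). It is monotonic if $T\subseteq S$ and $T\in\mathcal W$ imply $S\in\mathcal W$. For an integer $k\ge0$, a game $\mathcal W$ is $k$-monotonic if for every $S\subseteq[n]$ with $S\notin\mathcal W$ and every proper subset $T\subsetneq S$ there exists $K$ with $|K|\le k$ such that $T\setminus K\notin\mathcal W$; quasi-monotonic means 1-monotonic. Asymmetric non-reciprocal strong YES-quarrel of $i$ against $j$: for every $S\subseteq[n]\setminus\{i,j\}$, $S\cup\{i,j\}\in\hat{\mathcal W}\iff S\cup\{j\}\in\mathcal W$; $S\cup\{i\}\in\hat{\mathcal W}\iff S\cup\{i\}\in\mathcal W$; $S\cup\{j\}\in\hat{\mathcal W}\iff S\cup\{j\}\in\mathcal W$; $S\in\hat{\mathcal W}\iff S\in\mathcal W$. *)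

(* Players [n] are modelled as 'I_n (i.e. {0,...,n-1});
   a game is its collection of winning sets, a {set {set 'I_n}}. *)
From mathcomp Require Import all_boot.
Set Implicit Arguments. Unset Strict Implicit. Unset Printing Implicit Defensive.

Definition game (n : nat) := {set {set 'I_n}}.

Definition monotonic (n : nat) (W : game n) : Prop :=
  forall S T : {set 'I_n}, T \subset S -> T \in W -> S \in W.

Definition k_monotonic (n k : nat) (W : game n) : Prop :=
  forall S : {set 'I_n}, S \notin W ->
  forall T : {set 'I_n}, T \proper S ->
  exists K : {set 'I_n}, #|K| <= k /\ T :\: K \notin W.

Definition quasi_monotonic (n : nat) (W : game n) : Prop := k_monotonic 1 W.

Definition asym_nonrecip_strong_yes_quarrel (n : nat) (i j : 'I_n)
    (W Wh : game n) : Prop :=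
  forall S : {set 'I_n}, i \notin S -> j \notin S ->
    [/\ (S :|: [set i; j] \in Wh) = (S :|: [set j] \in W),
        (S :|: [set i] \in Wh) = (S :|: [set i] \in W),
        (S :|: [set j] \in Wh) = (S :|: [set j] \in W) &
        (S \in Wh) = (S \in W)].

From mathcomp Require Import all_boot.

Set Implicit Arguments.
Unset Strict Implicit.

(* The quarrel only changes the outcome of divisions in which both [i] and [j]
   vote YES, and there it simply discards [i]'s vote.  Hence if [S] loses in the
   new game, [S :\ i] loses in [W]; by monotonicity of [W] so does every
   [T :\ i] with [T] a subset of [S], and as [i] does not vote YES there,
   [T :\ i] also loses in the new game.  So [K = {i}] always works. *)

Section YesQuarrel.

Variables (n : nat) (W Wh : game n) (i j : 'I_n).
Hypotheses (neq_ij : i != j) (quarrel : asym_nonrecip_strong_yes_quarrel i j W Wh).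

Lemma mem_quarrel (X : {set 'I_n}) :
  (X \in Wh) = (if (i \in X) && (j \in X) then X :\ i \in W else X \in W).
Proof.
set S := X :\: [set i; j].
have iS : i \notin S by rewrite !inE eqxx.
have jS : j \notin S by rewrite !inE eqxx orbT.
have [winij wini winj win0] := quarrel iS jS.
have splitX (P : {set 'I_n}) : P \subset [set i; j] ->
    (i \in P) = (i \in X) -> (j \in P) = (j \in X) -> X = S :|: P.
  move=> /subsetP sPij iP jP; apply/setP=> x; rewrite !inE.
  have [-> | xi] := eqVneq x i; first by rewrite iP.
  have [-> | xj] := eqVneq x j; first by rewrite jP orbT.
  suff -> : (x \in P) = false by rewrite orbF.
  by apply/negbTE/negP => /sPij; rewrite !inE (negbTE xi) (negbTE xj).
have neq_ji : j != i by rewrite eq_sym.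
case iX: (i \in X); case jX: (j \in X) => /=.
- rewrite {1}(splitX [set i; j]) ?winij ?subxx ?inE ?eqxx ?orbT //.
  congr (_ \in W); apply/setP=> x; rewrite !inE.
  have [-> | xi] := eqVneq x i; first by rewrite (negbTE neq_ij).
  by have [-> | xj] := eqVneq x j; rewrite ?jX ?orbT ?orbF.
- by rewrite (splitX [set i]) ?wini ?sub1set ?inE ?eqxx ?(negbTE neq_ji) ?iX ?jX.
- by rewrite (splitX [set j]) ?winj ?sub1set ?inE ?eqxx ?(negbTE neq_ij) ?iX ?jX ?orbT.
- by rewrite (splitX set0) ?setU0 ?win0 ?sub0set ?inE ?iX ?jX.
Qed.

Lemma quarrel_losing_setD1 (X : {set 'I_n}) :
  monotonic W -> X \notin Wh -> X :\ i \notin W.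
Proof.
move=> monoW; rewrite mem_quarrel; case: ifP => // _.
by apply: contra; apply: monoW; apply: subD1set.
Qed.

End YesQuarrel.

Theorem theorem11 (n : nat) (W Wh : game n) (i j : 'I_n) :
  i != j -> monotonic W ->
  asym_nonrecip_strong_yes_quarrel i j W Wh ->
  quasi_monotonic Wh.
Proof.
move=> neq_ij monoW quarrel S SWh T /properP[sTS _].
exists [set i]; split; first by rewrite cards1.
rewrite (mem_quarrel neq_ij quarrel) !inE eqxx /=.
apply: contra (quarrel_losing_setD1 neq_ij quarrel monoW SWh).
by apply: monoW; apply: setSD.
Qed.
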